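(* Let $s_1,\dots,s_{d-1}$ be positive integers, $s_0=s_d=1$, with $s_{i-1}s_i\le n_i$ for all $i$, and let $T=\sum_{\alpha_1,\dots,\alpha_{d-1}} e_1^{\alpha_1}\otimes e_2^{\iota_2(\alpha_1,\alpha_2)}\otimes\cdots\otimes e_{d-1}^{\iota_{d-1}(\alpha_{d-2},\alpha_{d-1})}\otimes e_d^{\alpha_{d-1}}$. The stabilizer $H=\{g\in G:g\cdot T=T\}$ consists exactly of the elements $$\begin{bmatrix}A_1&M_1\\0&B_1\end{bmatrix}\times\begin{bmatrix}A_1^{-\mathsf T}\otimes A_2&M_2\\0&B_2\end{bmatrix}\times\cdots\times\begin{bmatrix}A_{d-2}^{-\mathsf T}\otimes A_{d-1}&M_{d-1}\\0&B_{d-1}\end{bmatrix}\times\begin{bmatrix}A_{d-1}^{-\mathsf T}&M_d\\0&B_d\end{bmatrix},$$ where $A_i\in\mathrm{GL}(s_i)$ ($1\le i\le d-1$), $B_i\in\mathrm{GL}(n_i-s_{i-1}s_i)$, and $M_i$ are arbitrary $s_{i-1}s_i\times(n_i-s_{i-1}s_i)$ matrices.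
   Context: Fix integers $d\ge 3$ and $n_1,\dots,n_d\ge 2$. $V=\mathbb{R}^{n_1}\otimes\cdots\otimes\mathbb{R}^{n_d}$, and $G=\mathrm{GL}(n_1)\times\cdots\times\mathrm{GL}(n_d)$ acts on $V$ by $(g_1,\dots,g_d)\cdot(v_1\otimes\cdots\otimes v_d)=(g_1v_1)\otimes\cdots\otimes(g_dv_d)$, extended linearly. $e_i^1,\dots,e_i^{n_i}$ is the standard basis of $\mathbb{R}^{n_i}$. For $2\le i\le d-1$, $\iota_i:[s_{i-1}]\times[s_i]\to[s_{i-1}s_i]$ is the lexicographic bijection with the first argument most significant, and the Kronecker product uses the matching convention $(A\otimes B)_{\iota_i(a,b),\iota_i(a',b')}=A_{aa'}B_{bb'}$. *)

From HB Require Import structures.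
From mathcomp Require Import all_boot all_order all_algebra.
From mathcomp Require Import reals.
Set Implicit Arguments. Unset Strict Implicit. Unset Printing Implicit Defensive.
Import Order.TTheory GRing.Theory Num.Theory.
Local Open Scope ring_scope.

(* Modes are numbered 0..d-1 (paper: 1..d); mode k has dimension n k.
   Bond dimensions: s 0 = s d = 1, s 1, ..., s (d-1) (paper s_0..s_d).
   Mode k carries the bond pair (s k, s k.+1), paper (s_{i-1}, s_i) with i = k+1. *)

Definition idx (d : nat) (n : nat -> nat) := {dffun forall k : 'I_d, 'I_(n k)}.

Definition tensor (R : pzRingType) (d : nat) (n : nat -> nat) := idx d n -> R.

Definition act (R : pzRingType) (d : nat) (n : nat -> nat)
  (g : forall k : 'I_d, 'M[R]_(n k)) (T : tensor R d n) : tensor R d n :=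
  fun i => \sum_(j : idx d n) (\prod_(k : 'I_d) g k (i k) (j k)) * T j.

Definition iota_lex (q a b : nat) : nat := a * q + b.

Definition basis_coord (R : pzRingType) (N : nat) (m : nat) (i : 'I_N) : R :=
  (nat_of_ord i == m)%:R.

(* Bond indices alpha_0, ..., alpha_d with alpha_j < s j; since s 0 = s d = 1,
   alpha_0 = alpha_d = 0 and the sum ranges exactly over alpha_1..alpha_{d-1}. *)
Definition bondidx (d : nat) (s : nat -> nat) := {dffun forall j : 'I_d.+1, 'I_(s j)}.

(* The tensor T = sum_alpha e_1^{alpha_1} (x) e_2^{iota(alpha_1,alpha_2)} (x) ... (x) e_d^{alpha_{d-1}},
   written uniformly as: mode k uses index iota_{s (k+1)}(alpha_k, alpha_{k+1}). *)
Definition TT (R : pzRingType) (d : nat) (n s : nat -> nat) : tensor R d n :=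
  fun i => \sum_(a : bondidx d s)
     \prod_(k : 'I_d)
        basis_coord R
          (iota_lex (s k.+1) (a (widen_ord (leqnSn d) k)) (a (lift ord0 k))) (i k).

(* Kronecker product with (A (x) B)_{iota(a,b), iota(a',b')} = A_{a a'} B_{b b'}. *)
Definition kron (R : pzRingType) (p q p' q' : nat)
  (A : 'M[R]_(p, p')) (B : 'M[R]_(q, q')) : 'M[R]_(p * q, p' * q') :=
  \matrix_(i, j) \sum_(a < p) \sum_(b < q) \sum_(a' < p') \sum_(b' < q')
      ((nat_of_ord i == iota_lex q a b) && (nat_of_ord j == iota_lex q' a' b'))%:R
        * A a a' * B b b'.

Definition blk (R : pzRingType) (n r : nat) (h : (r <= n)%N)
  (X : 'M[R]_r) (M : 'M[R]_(r, n - r)) (B : 'M[R]_(n - r)) : 'M[R]_n :=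
  castmx (subnKC h, subnKC h) (block_mx X M 0 B).

Definition stab_form (R : realType) (d : nat) (n s : nat -> nat)
  (hsn : forall k : 'I_d, (s k * s k.+1 <= n k)%N)
  (g : forall k : 'I_d, 'M[R]_(n k)) : Prop :=
  exists A : forall j : nat, 'M[R]_(s j),
    [/\ A 0%N = 1%:M, A d = 1%:M,
        (forall j : nat, (0 < j < d)%N -> A j \in unitmx) &
        forall k : 'I_d,
          exists (B : 'M[R]_(n k - s k * s k.+1))
                 (M : 'M[R]_(s k * s k.+1, n k - s k * s k.+1)),
            B \in unitmx /\
            g k = blk (hsn k) (kron (invmx (A k))^T (A k.+1)) M B].

From HB Require Import structures.
From mathcomp Require Import all_boot all_order all_algebra.
From mathcomp Require Import reals.
From mathcomp Require Import zify ring.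
From Stdlib Require Import FunctionalExtensionality.
Import Order.TTheory GRing.Theory Num.Theory.
Local Open Scope ring_scope.

(* T is the matrix product state with bonds a_0, ..., a_d (a_0 = a_d = 0), and
   inserting a matrix X on bond m gives a tensor T_m(X), with T_0(1) = T = T_d(1).
   If g_m has the block form of the theorem, applying it to T_m(A_m) gives
   T_(m+1)(A_(m+1)), so by induction g maps T = T_0(1) to T_d(1) = T.
   Conversely, if g.T = T, then g_(<m).T = g_(>=m)^-1.T: the left-hand side only
   changes the modes < m and the right-hand side only the modes >= m, so the
   common value is some T_m(X_m).  Comparing bonds m and m+1 and inverting X_m
   yields the block form of g_m, and X_(m+1) is invertible because g_m is. *)

Lemma prod_natb (R : comPzRingType) (I : finType) (b : I -> bool) :
  \prod_(k : I) ((b k)%:R : R) = ([forall k, b k])%:R.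
Proof.
case: (boolP [forall k, b k]) => [/forallP H|/forallPn [k hk]].
  by rewrite big1 // => k _; rewrite H.
by rewrite (bigD1 k) //= (negbTE hk) mul0r.
Qed.

Lemma sum_mul_eq (R : pzRingType) (I : finType) (F : I -> R) (y : I) :
  \sum_(x : I) F x * (x == y)%:R = F y.
Proof.
rewrite (bigD1 y) //= eqxx mulr1 big1 ?addr0 // => x /negbTE ->.
by rewrite mulr0.
Qed.

Lemma sum_ord_divn_modn {R : pzRingType} {N p q e : nat} (F : nat -> R) :
  (p * q <= N)%N -> (e < q)%N ->
  \sum_(x < N) ((x %/ q < p) && (x %% q == e))%N%:R * F x = \sum_(c < p) F (c * q + e)%N.
Proof.
move=> hN he.
transitivity (\sum_(x < N | ((x %/ q < p) && (x %% q == e))%N) F x).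
  rewrite [RHS]big_mkcond /=; apply: eq_bigr => x _.
  by case: ifP => _; rewrite ?mul1r ?mul0r.
have hq : (0 < q)%N by lia.
case: p hN => [|p] hN.
  by rewrite big_ord0 big_pred0 // => x; rewrite ltn0.
have hlt (c : 'I_p.+1) : (c * q + e < N)%N by have := ltn_ord c; nia.
rewrite (reindex_onto (fun c : 'I_p.+1 => Ordinal (hlt c))
                      (fun x : 'I_N => insubd ord0 (x %/ q)%N)) /=.
  apply: eq_bigl => c.
  rewrite divnMDl // divn_small // addn0 ltn_ord modnMDl modn_small // eqxx /=.
  by apply/eqP/val_inj; rewrite /= val_insubd ltn_ord.
move=> x /andP[h1 /eqP h2]; apply: val_inj => /=.
by rewrite val_insubd h1 -h2 -divn_eq.
Qed.

Lemma ord_up_ind {d : nat} (P : nat -> Prop) :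
  P 0%N -> (forall m : 'I_d, P m -> P m.+1) -> forall m, (m <= d)%N -> P m.
Proof.
move=> P0 PS; elim=> [//|m IH] hm.
exact: (PS (Ordinal hm) (IH (ltnW hm))).
Qed.

Lemma ord_down_ind {d : nat} (P : nat -> Prop) :
  P d -> (forall m : 'I_d, P m.+1 -> P m) -> forall m, (m <= d)%N -> P m.
Proof.
move=> Pd PS m hm; rewrite -(subKn hm); elim: (d - m)%N (leq_subr m d) => [|t IH] ht.
  by rewrite subn0.
have hlt : (d - t.+1 < d)%N by lia.
by have := PS (Ordinal hlt); rewrite /= subnSK //; apply; apply: IH; apply: ltnW.
Qed.

(* Matrix entries at natural-number indices, [0] out of range: this lets the
   matrices of the varying sizes ['M_(s m)] be indexed uniformly. *)
Definition fent (R : pzRingType) (p q : nat) (F : 'I_p -> 'I_q -> R) (a b : nat) : R :=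
  oapp (fun a' : 'I_p => oapp (fun b' : 'I_q => F a' b') 0 (insub b)) 0 (insub a).
Arguments fent {R p q} F a b.

Definition ent (R : pzRingType) (p q : nat) (M : 'M[R]_(p, q)) (a b : nat) : R :=
  fent (fun a' b' => M a' b') a b.
Arguments ent {R p q} M a b.

Section NatEntries.
Context {R : pzRingType}.

Lemma fentE {p q : nat} (F : 'I_p -> 'I_q -> R) (a : 'I_p) (b : 'I_q) :
  fent F a b = F a b.
Proof. by rewrite /fent !valK. Qed.

Lemma entE {p q : nat} (M : 'M[R]_(p, q)) (a : 'I_p) (b : 'I_q) : ent M a b = M a b.
Proof. exact: fentE. Qed.

Lemma insub_ordE {p a : nat} (h : (a < p)%N) : insub a = Some (Ordinal h) :> option 'I_p.
Proof.
case: (@insubP _ _ 'I_p a) => [u _ ev|]; last by rewrite h.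
by congr Some; apply: val_inj.
Qed.

Lemma ent_outr {p q : nat} (M : 'M[R]_(p, q)) (a b : nat) : (q <= b)%N -> ent M a b = 0.
Proof.
move=> h; rewrite /ent /fent (@insubF _ _ 'I_q b) //; last by lia.
by case: insub.
Qed.

Lemma ent_tr {p q : nat} (M : 'M[R]_(p, q)) (a b : nat) : ent M^T a b = ent M b a.
Proof.
rewrite /ent /fent.
case: (@insubP _ _ 'I_q a) => [a' _ _|_]; case: (@insubP _ _ 'I_p b) => [b' _ _|_] //=.
by rewrite mxE.
Qed.

Lemma ent_mx {p q : nat} (F : nat -> nat -> R) (a b : nat) :
  (a < p)%N -> (b < q)%N -> ent (\matrix_(i < p, j < q) F i j) a b = F a b.
Proof. by move=> ha hb; rewrite /ent /fent (insub_ordE ha) (insub_ordE hb) /= mxE. Qed.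

Lemma ent1 {p : nat} (a b : nat) : (a < p)%N -> ent (1%:M : 'M[R]_p) a b = (a == b)%:R.
Proof.
move=> ha; rewrite /ent /fent (insub_ordE ha) /=.
case: (@insubP _ _ 'I_p b) => [b' _ eb|hb] /=; first by rewrite mxE -eb.
by rewrite (_ : (a == b)%N = false) //; apply/negbTE; apply: contraNneq hb => <-.
Qed.

Lemma ent_mul {p : nat} (P Q : 'M[R]_p) (a b : nat) :
  \sum_(c < p) ent P a c * ent Q c b = ent (P *m Q) a b.
Proof.
rewrite /ent /fent.
case: (@insubP _ _ 'I_p a) => [a' _ _|_] /=; last by rewrite big1 // => c _; rewrite mul0r.
case: (@insubP _ _ 'I_p b) => [b' _ _|_] /=; last by rewrite big1 // => c _; rewrite valK /= mulr0.
by rewrite mxE; apply: eq_bigr => c _; rewrite valK.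
Qed.

Lemma sum_nat_eq_ord {p : nat} (G : 'I_p -> R) (v : nat) :
  \sum_(a : 'I_p) (v == a)%:R * G a = oapp G 0 (insub v).
Proof.
case: (@insubP _ _ 'I_p v) => [a' _ <-|hv] /=.
  rewrite (bigD1 a') //= eqxx mul1r big1 ?addr0 // => a ha.
  by rewrite (_ : (val a' == val a) = false) ?mul0r //; apply/negbTE; rewrite eq_sym.
rewrite big1 // => a _; have : (v == a)%N = false.
  by apply/negbTE/negP => /eqP E; move: hv; rewrite E ltn_ord.
by move=> ->; rewrite mul0r.
Qed.

Lemma sum_iota_lex {p q : nat} (F : 'I_p -> 'I_q -> R) (v : nat) :
  \sum_(a : 'I_p) \sum_(b : 'I_q) (v == iota_lex q a b)%:R * F a b
  = fent F (v %/ q) (v %% q).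
Proof.
case: (posnP q) => hq.
  move: F; rewrite hq => F.
  rewrite big1 => [|a _]; last by rewrite big_ord0.
  by rewrite /fent; case: (@insub _ _ 'I_0 (v %% 0)%N) => [[]|] //=; case: insub.
transitivity (\sum_(a : 'I_p) (v %/ q == a)%N%:R *
                \sum_(b : 'I_q) (v %% q == b)%N%:R * F a b).
  apply: eq_bigr => a _; rewrite big_distrr /=; apply: eq_bigr => b _.
  rewrite mulrA -natrM mulnb; congr ((nat_of_bool _)%:R * _).
  apply/eqP/andP => [->|[/eqP h1 /eqP h2]]; last by rewrite (divn_eq v q) h1 h2.
  by rewrite /iota_lex divnMDl // divn_small ?addn0 ?modnMDl ?modn_small.
under eq_bigr => a _ do rewrite sum_nat_eq_ord.
by rewrite sum_nat_eq_ord.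
Qed.

Lemma blkE {N r : nat} (h : (r <= N)%N) (X : 'M[R]_r)
  (M : 'M[R]_(r, N - r)) (B : 'M[R]_(N - r)) (y x : 'I_N) :
  blk h X M B y x =
  if (y < r)%N then (if (x < r)%N then ent X y x else ent M y (x - r)%N)
  else (if (x < r)%N then 0 else ent B (y - r)%N (x - r)%N).
Proof.
rewrite /blk castmxE /block_mx /col_mx /row_mx !mxE.
case: splitP => [i1 /= Ei|i2 /= Ei]; rewrite !mxE; case: splitP => [j1 /= Ej|j2 /= Ej];
  rewrite ?mxE ?Ei ?Ej ?ltn_ord ?addKn ?entE //; rewrite ltnNge leq_addr /= ?entE //.
by rewrite ltnNge leq_addr.
Qed.

End NatEntries.

Lemma kronE (R : comPzRingType) p q p' q' (A : 'M[R]_(p, p')) (B : 'M[R]_(q, q'))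
  (i : 'I_(p * q)) (j : 'I_(p' * q')) :
  kron A B i j = ent A (i %/ q)%N (j %/ q')%N * ent B (i %% q)%N (j %% q')%N.
Proof.
rewrite mxE.
transitivity (\sum_(a < p) \sum_(b < q) (nat_of_ord i == iota_lex q a b)%:R *
   (\sum_(a' < p') \sum_(b' < q') (nat_of_ord j == iota_lex q' a' b')%:R * (A a a' * B b b'))).
  apply: eq_bigr => a _; apply: eq_bigr => b _; rewrite big_distrr /=.
  apply: eq_bigr => a' _; rewrite big_distrr /=; apply: eq_bigr => b' _.
  rewrite -mulnb natrM; ring.
under eq_bigr => a _ do under eq_bigr => b _ do rewrite sum_iota_lex.
rewrite sum_iota_lex /ent /fent.
by case: insub => [a|] /=; case: insub => [b|] /=; case: insub => [a'|] /=;
  case: insub => [b'|] /=; rewrite ?mul0r ?mulr0.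
Qed.

Definition blk_ur {R : pzRingType} {N : nat} (r : nat) (G : 'M[R]_N) : 'M[R]_(r, N - r) :=
  \matrix_(i, j) ent G i (r + j)%N.

Definition blk_dr {R : pzRingType} {N : nat} (r : nat) (G : 'M[R]_N) : 'M[R]_(N - r) :=
  \matrix_(i, j) ent G (r + i)%N (r + j)%N.

Section BlockKron.
Context {R : comUnitRingType} {N p q : nat}.
Hypothesis hpqN : (p * q <= N)%N.

Lemma blk_kron_entry (X : 'M[R]_p) (Y : 'M[R]_q) M B (y : 'I_N) (c e : nat) :
  (c < p)%N -> (e < q)%N ->
  ent (blk hpqN (kron X^T Y) M B) y (c * q + e)%N = ent X c (y %/ q)%N * ent Y (y %% q)%N e.
Proof.
move=> hc he.
have hq : (0 < q)%N by apply: leq_ltn_trans he.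
have hx : (c * q + e < p * q)%N by nia.
have -> : (c * q + e)%N = Ordinal (leq_trans hx hpqN) by [].
rewrite entE blkE /= hx.
case: ifP => hy.
  have -> : nat_of_ord y = Ordinal hy by [].
  have -> : (c * q + e)%N = Ordinal hx by [].
  have Ediv : ((c * q + e) %/ q)%N = c by rewrite divnMDl // divn_small ?addn0.
  have Emod : ((c * q + e) %% q)%N = e by rewrite modnMDl modn_small.
  by rewrite entE kronE ent_tr /= Ediv Emod.
by rewrite ent_outr ?mul0r // leq_divRL // leqNgt hy.
Qed.

Lemma blk_kron_eq {G : 'M[R]_N} {X : 'M[R]_p} {Y : 'M[R]_q} :
  (forall (y : 'I_N) (c e : nat), (c < p)%N -> (e < q)%N ->
     ent G y (c * q + e)%N = ent X c (y %/ q)%N * ent Y (y %% q)%N e) ->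
  G = blk hpqN (kron X^T Y) (blk_ur (p * q) G) (blk_dr (p * q) G).
Proof.
move=> hG; apply/matrixP => y x; rewrite blkE -(entE G y x).
have hsub (z : 'I_N) : (p * q <= z)%N -> (z - p * q < N - p * q)%N.
  by move=> h; rewrite ltn_sub2r // (leq_ltn_trans h).
have hq (z : 'I_N) : (z < p * q)%N -> (0 < q)%N by case: q => //; rewrite muln0.
case: ifP => hy; case: ifP => hx.
- have -> : nat_of_ord y = Ordinal hy by [].
  have -> : nat_of_ord x = Ordinal hx by [].
  rewrite [in RHS]entE kronE ent_tr /= {1}(divn_eq x q) hG //.
    by rewrite ltn_divLR // (hq x).
  by rewrite ltn_pmod // (hq x).
- rewrite /blk_ur (ent_mx (fun a b => ent G a (p * q + b)%N)) //; last first.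
    by rewrite hsub // leqNgt hx.
  by rewrite subnKC // leqNgt hx.
- rewrite {1}(divn_eq x q) hG ?(ent_outr X) ?mul0r //.
  + by rewrite leq_divRL ?(hq x) // leqNgt hy.
  + by rewrite ltn_divLR // (hq x).
  + by rewrite ltn_pmod // (hq x).
- rewrite /blk_dr (ent_mx (fun a b => ent G (p * q + a)%N (p * q + b)%N)); first last.
  + by rewrite hsub // leqNgt hx.
  + by rewrite hsub // leqNgt hy.
  by rewrite !subnKC // leqNgt ?hx ?hy.
Qed.

Lemma blk_unitmx_dr (X : 'M[R]_(p * q)) M B :
  blk hpqN X M B \in unitmx -> B \in unitmx.
Proof.
have unit_cast m m' (e : m = m') (A : 'M[R]_m) :
    (castmx (e, e) A \in unitmx) = (A \in unitmx).
  by case: m' / e; rewrite castmx_id.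
by rewrite /blk unit_cast !unitmxE det_ublock unitrM => /andP[].
Qed.

End BlockKron.

Lemma sum_invmx_solve {R : comUnitRingType} {p : nat} {X : 'M[R]_p} (G H : 'I_p -> R) :
  X \in unitmx -> (forall b, \sum_c X b c * G c = H b) ->
  forall c, G c = \sum_b invmx X c b * H b.
Proof.
move=> hX hXG c.
have E : X *m \col_j G j = \col_j H j.
  by apply/colP => b; rewrite !mxE -hXG; apply: eq_bigr => j _; rewrite mxE.
have := congr1 (fun v => (invmx X *m v) c 0) E.
by rewrite mulKmx // !mxE => ->; apply: eq_bigr => b _; rewrite mxE.
Qed.

Lemma unitmx_lcols_factor {F : fieldType} {N q : nat} {G : 'M[F]_N}
  (C : 'M[F]_(N, q)) {Y : 'M[F]_q} :
  (q <= N)%N -> G \in unitmx -> G *m pid_mx q = C *m Y -> Y \in unitmx.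
Proof.
move=> hqN hG hGY; rewrite -row_full_unit /row_full eqn_leq rank_leq_col /=.
rewrite -{1}(rank_pid_mx F hqN (leqnn q)) -(mulKmx hG (pid_mx q)) hGY.
exact: leq_trans (mxrankM_maxr _ _) (mxrankM_maxr _ _).
Qed.

Section TensorChain.
Variables (R : fieldType) (d : nat) (n s : nat -> nat).
Hypothesis hn0 : forall k : 'I_d, (0 < n k)%N.
Hypothesis hs : forall j : nat, (j <= d)%N -> (0 < s j)%N.
Hypothesis hs0 : s 0%N = 1%N.
Hypothesis hsd : s d = 1%N.
Hypothesis hsn : forall k : 'I_d, (s k * s k.+1 <= n k)%N.
Hypothesis hd0 : (0 < d)%N.

Implicit Types (i : idx d n) (phi : nat -> nat).

Definition ival i (k : nat) : nat :=
  oapp (fun o : 'I_d => nat_of_ord (i o)) 0%N (insub k).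

Lemma ival_ord i (k : 'I_d) : ival i k = i k.
Proof. by rewrite /ival insubT //= => h; congr (nat_of_ord (i _)); apply: val_inj. Qed.

Lemma ival_out i k : (d <= k)%N -> ival i k = 0%N.
Proof. by move=> h; rewrite /ival insubF // ltnNge h. Qed.

Definition idx_of phi : idx d n := [ffun k => insubd (Ordinal (hn0 k)) (phi k)].

Lemma idx_ofE phi (k : 'I_d) : (phi k < n k)%N -> idx_of phi k = phi k :> nat.
Proof. by move=> h; rewrite ffunE val_insubd h. Qed.

Lemma ival_idx_of phi :
  (forall k : 'I_d, phi k < n k)%N -> (forall k, d <= k -> phi k = 0)%N ->
  ival (idx_of phi) = phi.
Proof.
move=> hlt hout; apply: functional_extensionality => k.
case: (ltnP k d) => hk; last by rewrite ival_out // hout.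
by rewrite (ival_ord _ (Ordinal hk)) idx_ofE.
Qed.

Definition idx_set i (m : 'I_d) (x : 'I_(n m)) : idx d n :=
  idx_of (fun k => if k == m then nat_of_ord x else ival i k).

Lemma idx_setE i (m : 'I_d) (x : 'I_(n m)) (k : 'I_d) :
  idx_set i m x k = (if k == m then nat_of_ord x else i k) :> nat.
Proof.
case: (eqVneq k m) => [->|h]; first by rewrite idx_ofE eqxx.
have h' : (k == m :> nat) = false by apply/negbTE.
by rewrite idx_ofE h' ?ival_ord.
Qed.

Lemma ival_idx_set i (m : 'I_d) (x : 'I_(n m)) k :
  ival (idx_set i m x) k = if k == m then nat_of_ord x else ival i k.
Proof.
rewrite ival_idx_of // => [{}k|{}k hk].
  by case: eqP => [/val_inj ->|]; rewrite ?ival_ord.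
by rewrite ifN ?ival_out // neq_ltn (leq_trans (ltn_ord m) hk) orbT.
Qed.

Lemma idx_set_id i (m : 'I_d) : idx_set i m (i m) = i.
Proof. by apply/ffunP => k; apply: val_inj; rewrite /= idx_setE; case: eqP => // ->. Qed.

Lemma idx_set_set i (m : 'I_d) (x z : 'I_(n m)) : idx_set (idx_set i m x) m z = idx_set i m z.
Proof. by apply/ffunP => k; apply: val_inj; rewrite /= !idx_setE; case: eqP. Qed.

Lemma idx_set_eq i (m : 'I_d) (x : 'I_(n m)) : idx_set i m x m = x.
Proof. by apply: val_inj; rewrite /= idx_setE eqxx. Qed.

Lemma idx_set_neq i (m : 'I_d) (x : 'I_(n m)) k : k != m -> idx_set i m x k = i k.
Proof. by move=> h; apply: val_inj; rewrite /= idx_setE (negbTE h). Qed.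

Lemma eq_act (f f' : forall k : 'I_d, 'M[R]_(n k)) (T : tensor R d n) i :
  (forall k, f k = f' k) -> act f T i = act f' T i.
Proof. by move=> h; apply: eq_bigr => j _; under eq_bigr => k _ do rewrite h. Qed.

Lemma act1 (T : tensor R d n) i : act (fun k => 1%:M) T i = T i.
Proof.
rewrite /act; under eq_bigr => j _.
  under eq_bigr => k _ do rewrite mxE.
  rewrite prod_natb.
  have -> : [forall k, i k == j k] = (j == i).
    by apply/forallP/eqP => [H|->] //; apply/ffunP => k; exact/esym/eqP/H.
  rewrite mulrC; over.
by rewrite sum_mul_eq.
Qed.

Lemma act_expand_mode (f f' : forall k : 'I_d, 'M[R]_(n k)) (m : 'I_d) (T : tensor R d n) i :
  (forall k, k != m -> f' k = f k) -> f m = 1%:M ->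
  act f' T i = \sum_(x < n m) f' m (i m) x * act f T (idx_set i m x).
Proof.
move=> hf hm; rewrite /act.
under [RHS]eq_bigr => x _.
  rewrite big_distrr /=; under eq_bigr => j _.
    rewrite (bigD1 m) //= hm idx_set_eq mxE.
    under eq_bigr => k hk do rewrite idx_set_neq //.
    rewrite !mulrA; over.
  over.
rewrite exchange_big /=; apply: eq_bigr => j _.
under [RHS]eq_bigr => x _ do rewrite -mulrA.
rewrite -big_distrl /= sum_mul_eq (bigD1 m) //= -mulrA; congr (_ * (_ * _)).
by apply: eq_bigr => k hk; rewrite hf.
Qed.

(* Writing [i_k = iota_lex (s k.+1) a_k a_(k+1)], the bond [a_k] is read off as
   [i_(k-1) %% s k], and [linked phi k] says that it is also [i_k %/ s k.+1]. *)
Definition bond phi (k : nat) : nat := if k is k'.+1 then (phi k' %% s k)%N else 0%N.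
Definition linked phi (k : nat) : bool := (phi k %/ s k.+1 == bond phi k)%N.
Definition prefix_chain (m : nat) phi : bool := all (linked phi) (iota 0 m).
Definition suffix_chain (m : nat) phi : bool :=
  if (m < d)%N then ((phi m %/ s m.+1 < s m) && all (linked phi) (iota m.+1 (d - m.+1)))%N
  else true.
Definition chain phi : bool := prefix_chain d phi.

Lemma bond_lt phi k : (k <= d)%N -> (bond phi k < s k)%N.
Proof. by case: k => [|k] hk /=; rewrite ?hs0 // ltn_pmod // hs. Qed.

Lemma eq_bond (m : nat) phi phi' : (forall k, (k < m)%N -> phi k = phi' k) ->
  bond phi m = bond phi' m.
Proof. by case: m => //= m h; rewrite h. Qed.

Lemma eq_prefix_chain (m : nat) phi phi' : (forall k, (k < m)%N -> phi k = phi' k) ->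
  prefix_chain m phi = prefix_chain m phi'.
Proof.
move=> h; apply: eq_in_all => k; rewrite mem_iota add0n => /andP[_ hk].
by rewrite /linked h // (eq_bond k phi phi') // => j hj; rewrite h // (ltn_trans hj).
Qed.

Lemma eq_suffix_chain (m : nat) phi phi' : (forall k, (m <= k)%N -> phi k = phi' k) ->
  suffix_chain m phi = suffix_chain m phi'.
Proof.
move=> h; rewrite /suffix_chain; case: ifP => // hm.
rewrite h //; congr (_ && _); apply: eq_in_all => k; rewrite mem_iota => /andP[hk _].
rewrite /linked h ?(ltnW hk) //; case: k hk => [|k] hk //=.
by rewrite h.
Qed.

Lemma prefix_chainS (m : nat) phi : prefix_chain m.+1 phi = prefix_chain m phi && linked phi m.
Proof. by rewrite /prefix_chain -addn1 iotaD all_cat /= andbT. Qed.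

Lemma suffix_chainS (m : nat) phi : (m < d)%N ->
  suffix_chain m phi =
  [&& (phi m %/ s m.+1 < s m)%N, (m.+1 < d)%N ==> linked phi m.+1 & suffix_chain m.+1 phi].
Proof.
move=> hm; rewrite /suffix_chain hm.
case: (ltnP m.+1 d) => hm1 /=; last first.
  have -> : m.+1 = d by apply/eqP; rewrite eqn_leq hm hm1.
  by rewrite subnn.
have -> : (d - m.+1 = (d - m.+2).+1)%N by rewrite subnSK.
rewrite /=; case hc: (linked phi m.+1) => //=.
by rewrite (eqP hc) /= ltn_pmod // hs // ltnW.
Qed.

Lemma suffix_chain_d phi : suffix_chain d phi.
Proof. by rewrite /suffix_chain ltnn. Qed.

Lemma suffix_chain0 phi : suffix_chain 0 phi = chain phi.
Proof.
rewrite /suffix_chain hd0 /chain /prefix_chain.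
have -> : d = (0 + 1 + (d - 1))%N by rewrite add0n subnKC.
by rewrite iotaD all_cat /= add0n !subn1 /= andbT /linked /= hs0 ltnS leqn0.
Qed.

Lemma bond_idx_set i (m : 'I_d) (x : 'I_(n m)) :
  bond (ival (idx_set i m x)) m = bond (ival i) m.
Proof. by apply: eq_bond => k hk; rewrite ival_idx_set ifN // neq_ltn hk. Qed.

Lemma suffix_chain_lt i (m : nat) : (m <= d)%N -> suffix_chain m (ival i) ->
  (ival i m %/ s m.+1 < s m)%N.
Proof.
rewrite /suffix_chain; case: ltnP => [_ _ /andP[] //|hdm hmd _].
have -> : m = d by apply/eqP; rewrite eqn_leq hmd.
by rewrite ival_out // div0n hsd.
Qed.

Lemma prefix_chain_set i (m : 'I_d) (x : 'I_(n m)) :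
  prefix_chain m (ival (idx_set i m x)) = prefix_chain m (ival i).
Proof. by apply: eq_prefix_chain => k hk; rewrite ival_idx_set ifN // neq_ltn hk. Qed.

Lemma suffix_chain_set i (m : 'I_d) (x : 'I_(n m)) :
  suffix_chain m (ival (idx_set i m x)) =
  [&& (x %/ s m.+1 < s m)%N, (x %% s m.+1 == ival i m.+1 %/ s m.+2)%N & suffix_chain m.+1 (ival i)].
Proof.
rewrite suffix_chainS // (eq_suffix_chain m.+1 _ (ival i)); last first.
  by move=> k hk; rewrite ival_idx_set ifN // neq_ltn hk orbT.
rewrite /linked /= !ival_idx_set eqxx ifN ?neq_ltn ?ltnSn ?orbT // eq_sym.
case: (ltnP m.+1 d) => //= hm1.
have -> : m.+1 = d by apply/eqP; rewrite eqn_leq hm1 ltn_ord.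
by rewrite ival_out // div0n hsd modn1.
Qed.

Lemma bonds_lt i (j : 'I_d.+1) : (bond (ival i) j < s j)%N.
Proof. exact: bond_lt (ltn_ord j). Qed.

Definition bonds_of i : bondidx d s :=
  [ffun j : 'I_d.+1 => Ordinal (bonds_lt i j)].

Lemma eq_iota_lex_chain i (a : bondidx d s) :
  [forall k : 'I_d, nat_of_ord (i k) ==
     iota_lex (s k.+1) (a (widen_ord (leqnSn d) k)) (a (lift ord0 k))]
  = (a == bonds_of i) && chain (ival i).
Proof.
apply/idP/idP.
  move/forallP => H.
  have Ha (j : 'I_d.+1) : nat_of_ord (a j) = bond (ival i) j.
    case: j => [[|j] hj] /=.
      have : (nat_of_ord (a (Ordinal hj)) < 1)%N by rewrite -hs0; exact: ltn_ord.
      by rewrite ltnS leqn0 => /eqP.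
    have hjd : (j < d)%N by [].
    have := H (Ordinal hjd).
    have -> : lift ord0 (Ordinal hjd) = Ordinal hj by apply: val_inj.
    rewrite /iota_lex (ival_ord i (Ordinal hjd)) => /eqP ->.
    by rewrite modnMDl modn_small //; exact: (ltn_ord (a (Ordinal hj))).
  apply/andP; split.
    by apply/eqP/ffunP => j; apply: val_inj; rewrite ffunE /= Ha.
  apply/allP => k; rewrite mem_iota add0n => /andP[_ hk].
  have := H (Ordinal hk); rewrite /linked (ival_ord i (Ordinal hk)) /iota_lex !Ha lift0 /=.
  move=> /eqP ->; rewrite divnMDl ?hs // divn_small ?addn0 //.
  exact: bond_lt.
case/andP => [/eqP -> hv]; apply/forallP => k.
rewrite !ffunE /= /iota_lex -(ival_ord i k).
have := allP hv k; rewrite mem_iota add0n ltn_ord => /(_ isT) /eqP <-.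
by rewrite -divn_eq.
Qed.

Lemma TTE i : @TT R d n s i = (chain (ival i))%:R.
Proof.
rewrite /TT; under eq_bigr => a _ do rewrite /basis_coord prod_natb eq_iota_lex_chain.
case: (boolP (chain (ival i))) => hv; last by rewrite big1 // => a _; rewrite andbF.
under eq_bigr => a _ do rewrite andbT.
by rewrite (bigD1 (bonds_of i)) //= eqxx big1 ?addr0 // => a /negbTE ->.
Qed.

(* A chain with bond [b] before mode [m] and a chain with bond [e] after it, with
   value [y] at mode [m]: zero except for [iota_lex _ 0 b], [y], [iota_lex _ e 0]
   at the modes [m-1], [m], [m+1]. *)
Definition probe (m b y e : nat) (k : nat) : nat :=
  if k.+1 == m then b else if k == m then y else if k == m.+1 then (e * s m.+2)%N else 0%N.

Definition probe_idx (m b y e : nat) : idx d n := idx_of (probe m b y e).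

Lemma ival_probe0 (m : nat) : ival (probe_idx m 0 0 0) = fun=> 0%N.
Proof.
have probe0 : probe m 0 0 0 = fun=> 0%N.
  by apply: functional_extensionality => k; rewrite /probe mul0n; do !case: ifP.
by rewrite /probe_idx probe0 ival_idx_of.
Qed.

Lemma chain0 : chain (fun=> 0%N).
Proof. by apply/allP => k _; rewrite /linked div0n; case: k => //= k; rewrite mod0n. Qed.

Lemma probe_shift (m u e : nat) :
  probe_idx m.+1 u (e * s m.+2) 0 = probe_idx m 0 u e.
Proof.
apply/ffunP => k; rewrite !ffunE; congr insubd; rewrite /probe mul0n.
by do !case: eqP; lia.
Qed.

Section Probe.
Context {m : 'I_d} {b y e : nat}.

Lemma ival_probe (hb : (b < s m)%N) (hy : (y < n m)%N) (he : (e < s m.+1)%N) :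
  ival (probe_idx m b y e) = probe m b y e.
Proof.
apply: ival_idx_of => [k|k hk]; rewrite /probe.
  case: eqP => [hk|_].
    apply: leq_trans (hsn k); apply: leq_trans hb _; rewrite -hk leq_pmull //.
    by apply: hs; apply: ltnW.
  case: eqP => [->|_] //; case: eqP => [hk|_]; last exact: hn0.
  apply: leq_trans (hsn k); rewrite hk ltn_mul2r he andbT.
  by apply: hs; rewrite -hk.
have hm := ltn_ord m.
have -> : (k.+1 == m) = false by lia.
have -> : (k == m) = false by lia.
case: eqP => // hk1; have hmd : m.+1 = d by lia.
by move: he; rewrite hmd hsd ltnS leqn0 => /eqP ->.
Qed.

Lemma probe_at : probe m b y e m = y.
Proof. by rewrite /probe ifN ?eqxx //; lia. Qed.

Lemma bond_probe (hb : (b < s m)%N) : bond (probe m b y e) m = b.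
Proof.
case: (nat_of_ord m) hb => [|m'] hb' /=; first by move: hb'; rewrite hs0 ltnS leqn0 => /eqP ->.
by rewrite /probe eqxx modn_small.
Qed.

Lemma prefix_chain_probe (hb : (b < s m)%N) : prefix_chain m (probe m b y e).
Proof.
apply/allP => k; rewrite mem_iota add0n => /andP[_ hk].
have bond0 : bond (probe m b y e) k = 0%N.
  case: k hk => //= k hk; rewrite /probe; do 3!(rewrite ifN; last by lia).
  by rewrite mod0n.
rewrite /linked bond0 /probe; case: (eqVneq k.+1 m) => [hk1|_].
  by rewrite hk1 divn_small.
by do 2!(rewrite ifN; last by lia); rewrite div0n.
Qed.

Lemma prefix_chainS_probe (hb : (b < s m)%N) :
  prefix_chain m.+1 (probe m b y e) = (y %/ s m.+1 == b)%N.
Proof.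
rewrite prefix_chainS prefix_chain_probe // /linked bond_probe // /probe.
by rewrite ifN ?eqxx //; lia.
Qed.

Lemma probe_succ (he : (e < s m.+1)%N) : (probe m b y e m.+1 %/ s m.+2)%N = e.
Proof.
rewrite /probe ifN; last by lia.
rewrite ifN ?eqxx; last by lia.
case: (ltnP m.+1 d) => hm1; first by rewrite mulnK // hs.
have hmd : m.+1 = d by apply/eqP; rewrite eqn_leq hm1 ltn_ord.
by move: he; rewrite hmd hsd ltnS leqn0 => /eqP ->; rewrite mul0n div0n.
Qed.

Lemma suffix_chain_probe (he : (e < s m.+1)%N) : suffix_chain m.+1 (probe m b y e).
Proof.
rewrite /suffix_chain; case: ifP => // hm1.
rewrite probe_succ // he /=; apply/allP => k; rewrite mem_iota => /andP[hk _].
rewrite /linked /probe; do 3!(rewrite ifN; last by lia).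
case: k hk => // k hk /=; rewrite /probe; do 2!(rewrite ifN; last by lia).
by rewrite div0n; case: (eqVneq k m.+1) => [->|_]; rewrite ?modnMl ?mod0n.
Qed.

End Probe.

Section PartialAction.
Variable g : forall k : 'I_d, 'M[R]_(n k).

Definition act_prefix (m : nat) : tensor R d n :=
  act (fun k => if (k < m)%N then g k else 1%:M) (@TT R d n s).

Lemma act_prefix0 i : act_prefix 0 i = @TT R d n s i.
Proof. by rewrite /act_prefix (eq_act _ (fun k => 1%:M)) ?act1. Qed.

Lemma act_prefix_d i : act_prefix d i = act g (@TT R d n s) i.
Proof. by rewrite /act_prefix (eq_act _ g) // => k; rewrite ltn_ord. Qed.

Lemma act_prefixS (m : 'I_d) i :
  act_prefix m.+1 i = \sum_(x < n m) g m (i m) x * act_prefix m (idx_set i m x).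
Proof.
rewrite /act_prefix (act_expand_mode (fun k => if (k < m)%N then g k else 1%:M) _ m);
  last by rewrite ltnn.
  by apply: eq_bigr => x _; rewrite ltnSn.
by move=> k hk; rewrite ltnS leq_eqVlt (negbTE hk : (k == m :> nat) = false).
Qed.

(* [T] with the matrix [X] inserted on the bond [m]: the partial action of [g]
   on the modes [< m] turns [T] into such a tensor. *)
Definition bond_tensor (m : nat) (X : 'M[R]_(s m)) (phi : nat -> nat) : R :=
  (prefix_chain m phi && suffix_chain m phi)%:R * ent X (bond phi m) (phi m %/ s m.+1)%N.

Lemma bond_tensor0 i : bond_tensor 0 1%:M (ival i) = @TT R d n s i.
Proof.
rewrite /bond_tensor suffix_chain0 TTE /=.
case hc: (chain (ival i)); rewrite ?mul0r // mul1r ent1 ?hs0 //.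
move: hc; rewrite -suffix_chain0 => /(suffix_chain_lt i 0 (leq0n d)).
by rewrite hs0 ltnS leqn0 eq_sym => ->.
Qed.

Lemma bond_tensor_d i : bond_tensor d 1%:M (ival i) = @TT R d n s i.
Proof.
rewrite /bond_tensor suffix_chain_d andbT TTE ival_out // div0n.
rewrite /chain; case: (prefix_chain _ _); rewrite ?mul0r // mul1r ent1; last exact: bond_lt.
by have := bond_lt (ival i) d (leqnn d); rewrite hsd ltnS leqn0 => /eqP ->.
Qed.

(* The coefficient of [g m] applied to [bond_tensor m X] at the value [y] of mode
   [m], between the bonds [b] entering and [e] leaving it. *)
Definition transfer {m : 'I_d} (X : 'M[R]_(s m)) (y b e : nat) : R :=
  \sum_(c < s m) ent (g m) y (c * s m.+1 + e)%N * ent X b c.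

Lemma act_prefixS_transfer {m : 'I_d} {X : 'M[R]_(s m)} :
  (forall i, act_prefix m i = bond_tensor m X (ival i)) ->
  forall i, act_prefix m.+1 i =
    (prefix_chain m (ival i) && suffix_chain m.+1 (ival i))%:R *
    transfer X (i m) (bond (ival i) m) (ival i m.+1 %/ s m.+2).
Proof.
move=> hX i; rewrite act_prefixS.
under eq_bigr => x _ do rewrite hX /bond_tensor prefix_chain_set suffix_chain_set
  bond_idx_set ival_idx_set eqxx -(entE (g m)).
set e := (ival i m.+1 %/ s m.+2)%N.
case: (boolP (prefix_chain m (ival i))) => hp /=; last first.
  by rewrite mul0r big1 // => x _; rewrite mul0r mulr0.
case: (boolP (suffix_chain m.+1 (ival i))) => hsuf; last first.
  by rewrite mul0r big1 // => x _; rewrite !andbF mul0r mulr0.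
have he : (e < s m.+1)%N by apply: suffix_chain_lt.
under eq_bigr => x _ do rewrite andbT mulrCA.
rewrite mul1r.
rewrite (sum_ord_divn_modn
  (fun x => ent (g m) (i m) x * ent X (bond (ival i) m) (x %/ s m.+1)%N)) //.
by apply: eq_bigr => c _; rewrite divnMDl ?hs // (divn_small he) addn0.
Qed.

Lemma act_prefixS_bond_tensor {m : 'I_d} {X : 'M[R]_(s m)} {Y : 'M[R]_(s m.+1)} :
  (forall i, act_prefix m i = bond_tensor m X (ival i)) ->
  (forall (y : 'I_(n m)) (b e : nat), (b < s m)%N -> (e < s m.+1)%N ->
     transfer X y b e = (y %/ s m.+1 == b)%N%:R * ent Y (y %% s m.+1)%N e) ->
  forall i, act_prefix m.+1 i = bond_tensor m.+1 Y (ival i).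
Proof.
move=> hX hXY i; rewrite (act_prefixS_transfer hX) /bond_tensor prefix_chainS.
case: (boolP (prefix_chain m (ival i))) => hp; last by rewrite !mul0r.
case: (boolP (suffix_chain m.+1 (ival i))) => hsuf; last by rewrite !andbF !mul0r.
have hb : (bond (ival i) m < s m)%N by apply: bond_lt; apply: ltnW.
have he := suffix_chain_lt i m.+1 (ltn_ord m) hsuf.
rewrite /= hXY // /linked /= ival_ord andbT mul1r.
by case: (_ == _); rewrite ?mul1r ?mul0r.
Qed.

Lemma transfer_solve {m : 'I_d} {X : 'M[R]_(s m)} {Y : 'M[R]_(s m.+1)} {y : 'I_(n m)} {e : nat} :
  X \in unitmx ->
  (forall b, (b < s m)%N -> transfer X y b e = (y %/ s m.+1 == b)%N%:R * ent Y (y %% s m.+1)%N e) ->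
  forall c, (c < s m)%N ->
  ent (g m) y (c * s m.+1 + e)%N = ent (invmx X) c (y %/ s m.+1)%N * ent Y (y %% s m.+1)%N e.
Proof.
move=> hX hXY c hc.
pose H (b : 'I_(s m)) := (y %/ s m.+1 == b)%N%:R * ent Y (y %% s m.+1)%N e.
have hXG (b : 'I_(s m)) : \sum_c X b c * ent (g m) y (c * s m.+1 + e)%N = H b.
  by rewrite /H -hXY // /transfer; apply: eq_bigr => c' _; rewrite mulrC entE.
have -> : c = Ordinal hc by [].
rewrite (sum_invmx_solve _ _ hX hXG) /H.
under eq_bigr => b _ do rewrite mulrCA.
rewrite (sum_nat_eq_ord (fun b => invmx X (Ordinal hc) b * ent Y (y %% s m.+1)%N e)).
by rewrite /ent [in RHS]/fent valK /=; case: insub => [b|] /=; rewrite ?mul0r.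
Qed.

Section Backward.
Variable A : forall j : nat, 'M[R]_(s j).
Hypothesis hA0 : A 0%N = 1%:M.
Hypothesis hAd : A d = 1%:M.
Hypothesis hAu : forall j : nat, (0 < j < d)%N -> A j \in unitmx.
Hypothesis hgA : forall k : 'I_d, exists (B : 'M[R]_(n k - s k * s k.+1))
  (M : 'M[R]_(s k * s k.+1, n k - s k * s k.+1)),
  g k = blk (hsn k) (kron (invmx (A k))^T (A k.+1)) M B.

Lemma transfer_blk (m : 'I_d) (y : 'I_(n m)) (b e : nat) : (b < s m)%N -> (e < s m.+1)%N ->
  transfer (A m) y b e = (y %/ s m.+1 == b)%N%:R * ent (A m.+1) (y %% s m.+1)%N e.
Proof.
move=> hb he; rewrite /transfer; have [B [M ->]] := hgA m.
have hAm : A m \in unitmx.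
  by case: (posnP m) => [->|hm]; [rewrite hA0 unitmx1 | apply: hAu; rewrite hm /=].
under eq_bigr => c _ do rewrite blk_kron_entry // mulrC mulrA.
by rewrite -big_distrl /= ent_mul mulmxV // ent1 // eq_sym.
Qed.

Lemma act_prefix_blk (m : nat) : (m <= d)%N ->
  forall i, act_prefix m i = bond_tensor m (A m) (ival i).
Proof.
move: m; apply: (ord_up_ind (fun m => forall i,
  act_prefix m i = bond_tensor m (A m) (ival i))) => [i|m IH].
  by rewrite act_prefix0 hA0 bond_tensor0.
exact: act_prefixS_bond_tensor IH (@transfer_blk m).
Qed.

Lemma act_fixed_blk i : act g (@TT R d n s) i = @TT R d n s i.
Proof. by rewrite -act_prefix_d act_prefix_blk // hAd bond_tensor_d. Qed.

End Backward.

Section Forward.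
Hypothesis hg : forall k : 'I_d, g k \in unitmx.
Hypothesis hfix : forall i, act g (@TT R d n s) i = @TT R d n s i.

Definition act_suffix (m : nat) : tensor R d n :=
  act (fun k => if (k < m)%N then 1%:M else invmx (g k)) (@TT R d n s).

Lemma act_suffix_d i : act_suffix d i = @TT R d n s i.
Proof. by rewrite /act_suffix (eq_act _ (fun k => 1%:M)) ?act1 // => k; rewrite ltn_ord. Qed.

Lemma act_suffixS (m : 'I_d) i :
  act_suffix m i = \sum_(x < n m) invmx (g m) (i m) x * act_suffix m.+1 (idx_set i m x).
Proof.
rewrite /act_suffix (act_expand_mode (fun k => if (k < m.+1)%N then 1%:M else invmx (g k)) _ m);
  last by rewrite ltnSn.
  by apply: eq_bigr => x _; rewrite ltnn.
move=> k hk; rewrite [(k < m.+1)%N]ltnS [(k <= m)%N]leq_eqVlt.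
by rewrite (negbTE hk : (k == m :> nat) = false).
Qed.

(* [act_suffix m] does not change the modes [< m]; it only sees whether they form
   a chain and which bond they pass on to mode [m]. *)
Definition act_suffix_local (m : nat) : Prop :=
  (forall i, ~~ prefix_chain m (ival i) -> act_suffix m i = 0) /\
  (forall i i', (forall k, (m <= k)%N -> ival i k = ival i' k) ->
     prefix_chain m (ival i) -> prefix_chain m (ival i') ->
     bond (ival i) m = bond (ival i') m -> act_suffix m i = act_suffix m i').

Lemma prefix_chainS_set i (m : 'I_d) (x : 'I_(n m)) :
  prefix_chain m.+1 (ival (idx_set i m x)) =
  prefix_chain m (ival i) && (x %/ s m.+1 == bond (ival i) m)%N.
Proof. by rewrite prefix_chainS prefix_chain_set /linked ival_idx_set eqxx bond_idx_set. Qed.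

Lemma act_suffix_localS (m : 'I_d) : act_suffix_local m.+1 -> act_suffix_local m.
Proof.
move=> [IHa IHb]; split.
  move=> i hi; rewrite act_suffixS big1 // => x _.
  by rewrite IHa ?mulr0 // prefix_chainS_set (negbTE hi).
move=> i i' hag hp hp' hb.
have eqm : i m = i' m by apply: val_inj; rewrite /= -!ival_ord hag.
rewrite !act_suffixS eqm; apply: eq_bigr => x _; congr (_ * _).
have E : prefix_chain m.+1 (ival (idx_set i m x)) = prefix_chain m.+1 (ival (idx_set i' m x)).
  by rewrite !prefix_chainS_set hb hp hp'.
case hpx: (prefix_chain m.+1 (ival (idx_set i m x))); last by rewrite !IHa -?E ?hpx.
apply: IHb; rewrite -?E //.
- move=> k hk; have hkm : (k == m) = false by apply/negbTE; rewrite neq_ltn hk orbT.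
  by rewrite !ival_idx_set hkm hag // ltnW.
- by rewrite /= !ival_idx_set !eqxx.
Qed.

Lemma act_suffix_localP (m : nat) : (m <= d)%N -> act_suffix_local m.
Proof.
move: m; apply: (ord_down_ind _ _ act_suffix_localS).
split=> [i|i i' _]; rewrite !act_suffix_d !TTE /chain.
  by move/negbTE ->.
by move=> -> ->.
Qed.

Lemma act_prefix_suffix (m : nat) : (m <= d)%N -> forall i, act_prefix m i = act_suffix m i.
Proof.
move: m; apply: (ord_down_ind (fun m => forall i, act_prefix m i = act_suffix m i)).
  by move=> i; rewrite act_prefix_d hfix act_suffix_d.
move=> m IH i; rewrite act_suffixS.
under eq_bigr => x _ do rewrite -IH act_prefixS idx_set_eq big_distrr /=.
rewrite exchange_big /=.
under eq_bigr => z _.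
  under eq_bigr => x _ do rewrite idx_set_set mulrA.
  rewrite -big_distrl /=.
  have -> : \sum_(x < n m) invmx (g m) (i m) x * g m x z = (invmx (g m) *m g m) (i m) z.
    by rewrite mxE.
  rewrite mulVmx // mxE eq_sym mulrC.
  over.
by rewrite sum_mul_eq idx_set_id.
Qed.

(* If [act_prefix m] is some [bond_tensor m X], then [X] is read off at probes. *)
Definition bond_mx (m : nat) : 'M[R]_(s m) :=
  \matrix_(b, c) act_prefix m (probe_idx m b (c * s m.+1) 0).

Lemma bond_mx_trivial (m : nat) : s m = 1%N -> act_prefix m (probe_idx m 0 0 0) = 1 ->
  bond_mx m = 1%:M.
Proof.
move=> h1 hT; apply/matrixP => b c.
have hb : nat_of_ord b = 0%N by apply/eqP; rewrite -leqn0 -ltnS -[1%N]h1.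
have hc : nat_of_ord c = 0%N by apply/eqP; rewrite -leqn0 -ltnS -[1%N]h1.
by rewrite !mxE hb hc mul0n hT (_ : b == c) //; apply/eqP/val_inj; rewrite /= hb hc.
Qed.

Lemma bond_mx0 : bond_mx 0 = 1%:M.
Proof. by apply: bond_mx_trivial; rewrite ?hs0 // act_prefix0 TTE ival_probe0 chain0. Qed.

Lemma bond_mx_d : bond_mx d = 1%:M.
Proof. by apply: bond_mx_trivial; rewrite ?hsd // act_prefix_d hfix TTE ival_probe0 chain0. Qed.

Lemma transfer_probe {m : 'I_d} {X : 'M[R]_(s m)} :
  (forall i, act_prefix m i = bond_tensor m X (ival i)) ->
  forall b y e, (b < s m)%N -> (y < n m)%N -> (e < s m.+1)%N ->
  transfer X y b e = act_prefix m.+1 (probe_idx m b y e).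
Proof.
move=> hX b y e hb hy he.
rewrite (act_prefixS_transfer hX) -ival_ord (ival_probe hb hy he) probe_at.
by rewrite prefix_chain_probe // suffix_chain_probe // bond_probe // probe_succ // mul1r.
Qed.

Lemma transfer_bond_mx {m : 'I_d} :
  (forall i, act_prefix m i = bond_tensor m (bond_mx m) (ival i)) ->
  forall (y : 'I_(n m)) (b e : nat), (b < s m)%N -> (e < s m.+1)%N ->
  transfer (bond_mx m) y b e = (y %/ s m.+1 == b)%N%:R * ent (bond_mx m.+1) (y %% s m.+1)%N e.
Proof.
move=> hX y b e hb he.
have hsm : (0 < s m)%N by apply: hs; apply: ltnW.
have hu : (y %% s m.+1 < s m.+1)%N by rewrite ltn_pmod // hs.
have hun : (y %% s m.+1 < n m)%N.
  by apply: leq_trans hu (leq_trans _ (hsn m)); rewrite leq_pmull.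
have hm1 : (m.+1 <= d)%N := ltn_ord m.
have [vanish local] := act_suffix_localP m.+1 hm1.
rewrite (transfer_probe hX) // (act_prefix_suffix m.+1 hm1) /bond_mx.
rewrite (ent_mx (fun b c => act_prefix m.+1 (probe_idx m.+1 b (c * s m.+2) 0))) //.
rewrite probe_shift (act_prefix_suffix m.+1 hm1).
case: eqP => hyb; last first.
  by rewrite mul0r vanish // (ival_probe hb (ltn_ord y) he) prefix_chainS_probe //; apply/eqP.
have hiv := ival_probe hb (ltn_ord y) he; have hiv' := ival_probe hsm hun he.
rewrite mul1r; apply: local; rewrite ?hiv ?hiv'.
- move=> k hk; have hk1 : (k.+1 == m) = false by lia.
  have hk2 : (k == m) = false by lia.
  by rewrite /probe hk1 hk2.
- by rewrite prefix_chainS_probe // hyb.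
- by rewrite prefix_chainS_probe // divn_small.
- by rewrite /= !probe_at modn_mod.
Qed.

Lemma transfer_unitmx {m : 'I_d} {X : 'M[R]_(s m)} {Y : 'M[R]_(s m.+1)} :
  X \in unitmx ->
  (forall (y : 'I_(n m)) (b e : nat), (b < s m)%N -> (e < s m.+1)%N ->
     transfer X y b e = (y %/ s m.+1 == b)%N%:R * ent Y (y %% s m.+1)%N e) ->
  Y \in unitmx.
Proof.
move=> hX hXY.
have hsm : (0 < s m)%N by apply: hs; apply: ltnW.
have hle : (s m.+1 <= n m)%N by apply: leq_trans (hsn m); rewrite leq_pmull.
(* By [transfer_solve] at [c = 0], the first [s m.+1] columns of [g m] factor
   through [Y]. *)
pose C : 'M[R]_(n m, s m.+1) :=
  \matrix_(y, u) (ent (invmx X) 0 (y %/ s m.+1)%N * (y %% s m.+1 == u)%N%:R).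
apply: (unitmx_lcols_factor C hle (hg m)); apply/matrixP => y e; rewrite !mxE.
have hu : (y %% s m.+1 < s m.+1)%N by rewrite ltn_pmod // hs.
transitivity (ent (g m) y (0 * s m.+1 + e)%N).
  have -> : (0 * s m.+1 + e)%N = widen_ord hle e by rewrite mul0n add0n.
  rewrite entE (bigD1 (widen_ord hle e)) //= mxE /= eqxx ltn_ord mulr1 big1 ?addr0 // => x hx.
  rewrite mxE (_ : (x == e :> nat) = false) ?mulr0 //.
  by apply: contraNF hx => /eqP hxe; apply/eqP/val_inj.
rewrite (transfer_solve hX (fun b hb => hXY y b e hb (ltn_ord e))) //.
under eq_bigr => u _ do rewrite mxE -mulrA.
rewrite -big_distrr /= (sum_nat_eq_ord (fun u => Y u e)).
by rewrite /ent /fent (insub_ordE hu) /= valK.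
Qed.

Lemma act_prefix_bond_mx (m : nat) : (m <= d)%N ->
  (forall i, act_prefix m i = bond_tensor m (bond_mx m) (ival i)) /\ bond_mx m \in unitmx.
Proof.
move: m; apply: (ord_up_ind (fun m =>
  (forall i, act_prefix m i = bond_tensor m (bond_mx m) (ival i)) /\ bond_mx m \in unitmx)).
  by rewrite bond_mx0 unitmx1; split=> // i; rewrite act_prefix0 bond_tensor0.
move=> m [hX hXu]; have hT := transfer_bond_mx hX.
by split; [exact: act_prefixS_bond_tensor hX hT | exact: transfer_unitmx hXu hT].
Qed.

Lemma stabilizer_blk : exists A : forall j : nat, 'M[R]_(s j),
  [/\ A 0%N = 1%:M, A d = 1%:M, (forall j : nat, (0 < j < d)%N -> A j \in unitmx) &
      forall k : 'I_d, exists (B : 'M[R]_(n k - s k * s k.+1))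
        (M : 'M[R]_(s k * s k.+1, n k - s k * s k.+1)),
        B \in unitmx /\ g k = blk (hsn k) (kron (invmx (A k))^T (A k.+1)) M B].
Proof.
exists bond_mx; split; [exact: bond_mx0 | exact: bond_mx_d | |].
  by move=> j /andP[_ hj]; case: (act_prefix_bond_mx j (ltnW hj)).
move=> k; have [hX hXu] := act_prefix_bond_mx k (ltnW (ltn_ord k)).
have Eg := blk_kron_eq (hsn k) (fun y c e hc he =>
  transfer_solve hXu (fun b hb => transfer_bond_mx hX y b e hb he) c hc).
exists (blk_dr _ (g k)), (blk_ur _ (g k)); split => //.
by move: (hg k); rewrite {1}Eg => /blk_unitmx_dr.
Qed.

End Forward.

End PartialAction.
End TensorChain.

Theorem mainTheorem12 (R : realType) (d : nat) (n s : nat -> nat)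
  (hd : (3 <= d)%N)
  (hn : forall k : 'I_d, (2 <= n k)%N)
  (hs0 : s 0%N = 1%N) (hsd : s d = 1%N)
  (hspos : forall j : nat, (0 < j < d)%N -> (0 < s j)%N)
  (hsn : forall k : 'I_d, (s k * s k.+1 <= n k)%N)
  (g : forall k : 'I_d, 'M[R]_(n k))
  (hg : forall k : 'I_d, g k \in unitmx) :
  (forall i : idx d n, act g (@TT R d n s) i = @TT R d n s i)
  <-> stab_form hsn g.
Proof.
have hn0 (k : 'I_d) : (0 < n k)%N by apply: leq_trans (hn k).
have hd0 : (0 < d)%N by apply: leq_trans hd.
have hs (j : nat) : (j <= d)%N -> (0 < s j)%N.
  rewrite leq_eqVlt => /orP[/eqP ->|hj]; first by rewrite hsd.
  by case: (posnP j) => [->|hj0]; rewrite ?hs0 // hspos // hj0.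
split=> [hfix | [A [hA0 hAd hAu hgA]]].
  exact: stabilizer_blk hn0 hs hs0 hsd hsn hd0 g hg hfix.
have hblk k : exists B M, g k = blk (hsn k) (kron (invmx (A k))^T (A k.+1)) M B.
  by have [B [M [_ ->]]] := hgA k; exists B, M.
exact: act_fixed_blk hn0 hs hs0 hsd hsn hd0 g A hA0 hAd hAu hblk.
Qed.
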